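(* Let $\omega:\Gamma^2\to\Gamma$ be a group morphism and $h\in\Gamma$, and suppose there is a map $b:\{0,1\}^*\to\Gamma$ with $b(u)=h\cdot\omega(b(u0),b(u1))$ for all $u\in\{0,1\}^*$. Then $G(\omega)\cong G(\mathrm{ad}(h)\circ\omega)$.
   Context: $\mathrm{ad}(h)(g)=hgh^{-1}$. $\{0,1\}^*$ denotes the finite words over $\{0,1\}$; $\mathfrak C=\{0,1\}^{\mathbb N}$. A finite complete prefix code is a finite set $\{t_1,\dots,t_n\}\subset\{0,1\}^*$ such that every $x\in\mathfrak C$ has exactly one $t_i$ as prefix. Thompson's group $V$ is the group of homeomorphisms $v$ of $\mathfrak C$ for which there exist finite complete prefix codes $\{t_i\},\{s_i\}$ and a permutation $\sigma$ with $v(t_iw)=s_{\sigma(i)}w$. For a group morphism $\omega:\Gamma^2\to\Gamma$, $K(\omega)$ is the group of maps $a:\{0,1\}^*\to\Gamma$ (pointwise product) with $a(u)=\omega(a(u0),a(u1))$ for all $u$; $V$ acts on it by $\pi(v)(a)(s_{\sigma(i)}u)=a(t_iu)$ for all $i$, $u$ (determining $\pi(v)(a)\in K(\omega)$ uniquely); $G(\omega):=K(\omega)\rtimes V$ with $vav^{-1}=\pi(v)(a)$. *)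

From Stdlib Require Import ClassicalEpsilon.
From mathcomp Require Import all_boot fingroup perm.
Set Implicit Arguments. Unset Strict Implicit. Unset Printing Implicit Defensive.

Record group := Group {
  gcar :> Type;
  gmul : gcar -> gcar -> gcar;
  gone : gcar;
  ginv : gcar -> gcar;
  gmulA : forall x y z, gmul x (gmul y z) = gmul (gmul x y) z;
  gmul1 : forall x, gmul gone x = x;
  gmulV : forall x, gmul (ginv x) x = gone
}.

Definition is_morph2 (Gam : group) (om : Gam -> Gam -> Gam) : Prop :=
  forall x1 x2 y1 y2,
    om (gmul x1 y1) (gmul x2 y2) = gmul (om x1 x2) (om y1 y2).

Definition ad (Gam : group) (h : Gam) (g : Gam) : Gam := gmul (gmul h g) (ginv h).

(** Finite words {0,1}^* are [seq bool] (false = 0, true = 1);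
    the Cantor space C = {0,1}^N is [nat -> bool]. *)
Definition word := seq bool.
Definition cantor := nat -> bool.

Definition wcat (t : word) (w : cantor) : cantor :=
  fun k => if k < size t then nth false t k else w (k - size t).

Definition is_prefix (t : word) (x : cantor) : Prop :=
  forall k, k < size t -> x k = nth false t k.

Definition complete_prefix_code (n : nat) (t : 'I_n -> word) : Prop :=
  forall x : cantor, exists! i, is_prefix (t i) x.

Definition V_codes (v : cantor -> cantor) (n : nat) (t s : 'I_n -> word)
    (sigma : {perm 'I_n}) : Prop :=
  [/\ complete_prefix_code t, complete_prefix_code s &
      forall i w, v (wcat (t i) w) = wcat (s (sigma i)) w].

(** Thompson's group V (as a set of self-maps of C; group law = composition). *)
Definition inV (v : cantor -> cantor) : Prop :=
  exists n t s sigma, @V_codes v n t s sigma.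

Definition inK (Gam : group) (om : Gam -> Gam -> Gam) (a : word -> Gam) : Prop :=
  forall u, a u = om (a (rcons u false)) (a (rcons u true)).

Definition kmul (Gam : group) (a b : word -> Gam) : word -> Gam :=
  fun u => gmul (a u) (b u).

Definition pi_spec (Gam : group) (om : Gam -> Gam -> Gam)
    (v : cantor -> cantor) (a b : word -> Gam) : Prop :=
  inK om b /\
  exists n t s sigma, @V_codes v n t s sigma /\
    forall i u, b (s (sigma i) ++ u) = a (t i ++ u).

(** pi(v)(a): the unique b with pi_spec (it exists and is unique for v in V
    and a in K(omega), as stated in the paper). *)
Definition pi (Gam : group) (om : Gam -> Gam -> Gam)
    (v : cantor -> cantor) (a : word -> Gam) : word -> Gam :=
  epsilon (inhabits a) (pi_spec om v a).

(** G(omega) = K(omega) ⋊ V : elements are pairs (a, v), a in K(omega), v in V,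
    with (a,v)(a',v') = (a * pi(v)(a'), v v')  (since v a' v^{-1} = pi(v)(a')). *)
Definition Gelt (Gam : group) := ((word -> Gam) * (cantor -> cantor))%type.

Definition inG (Gam : group) (om : Gam -> Gam -> Gam) (x : Gelt Gam) : Prop :=
  inK om x.1 /\ inV x.2.

Definition Gmul (Gam : group) (om : Gam -> Gam -> Gam) (x y : Gelt Gam) : Gelt Gam :=
  (kmul x.1 (pi om x.2 y.1), x.2 \o y.2).

Definition G_isomorphic (Gam : group) (om1 om2 : Gam -> Gam -> Gam) : Prop :=
  exists f : Gelt Gam -> Gelt Gam,
    [/\ (forall x, inG om1 x -> inG om2 (f x)),
        (forall x y, inG om1 x -> inG om1 y -> f x = f y -> x = y),
        (forall y, inG om2 y -> exists2 x, inG om1 x & f x = y) &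
        (forall x y, inG om1 x -> inG om1 y -> f (Gmul om1 x y) = Gmul om2 (f x) (f y))].

From Stdlib Require Import ClassicalEpsilon FunctionalExtensionality.
From mathcomp Require Import all_boot fingroup perm zify.
Set Implicit Arguments. Unset Strict Implicit. Unset Printing Implicit Defensive.

(* For any binary operation R on Γ, an element v of V carries every R-coherent
   map c : {0,1}^* -> Γ to a unique R-coherent map c' with c'(w) = c(w')
   whenever v maps the cylinder w'𝔠 onto w𝔠: below a fixed depth every
   cylinder is such an image, and coherence determines the shallower values.
   For R = ω this is π(v), and transport is compatible with composition in v
   and with pointwise products.  Taking R = h·ω, the hypothesis says that b is
   R-coherent; with T_v the transport of b along v, the map
   (a, v) ↦ (b · a · T_v⁻¹, v) sends K(ω) ⋊ V onto K(ad(h)∘ω) ⋊ V, and it is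
   multiplicative because π_{ad(h)∘ω}(v)(b · a' · T_{v'}⁻¹)
   = T_v · π_ω(v)(a') · T_{vv'}⁻¹. *)

Section GroupFacts.
Variable G : group.
Implicit Types x y z : G.

Lemma gmulgV x : gmul x (ginv x) = @gone G.
Proof.
have -> : gmul x (ginv x) = gmul (gmul (ginv (ginv x)) (ginv x)) (gmul x (ginv x)).
  by rewrite gmulV gmul1.
by rewrite -gmulA [gmul (ginv x) (gmul x _)]gmulA gmulV gmul1 gmulV.
Qed.

Lemma gmulg1 x : gmul x (@gone G) = x.
Proof. by rewrite -(gmulV x) gmulA gmulgV gmul1. Qed.

Lemma gmulK x y : gmul (gmul x y) (ginv y) = x.
Proof. by rewrite -gmulA gmulgV gmulg1. Qed.

Lemma gmulVK x y : gmul (gmul x (ginv y)) y = x.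
Proof. by rewrite -gmulA gmulV gmulg1. Qed.

Lemma gmulI x : injective (@gmul G x).
Proof. by move=> y z e; rewrite -(gmul1 y) -(gmulV x) -gmulA e gmulA gmulV gmul1. Qed.

Lemma gmulIr x : injective ((@gmul G)^~ x).
Proof. by move=> y z e; rewrite -(gmulK y x) e gmulK. Qed.

Lemma ginv_unique x z : gmul z x = @gone G -> z = ginv x.
Proof. by move=> e; rewrite -(gmulg1 z) -(gmulgV x) gmulA e gmul1. Qed.

Lemma ginvM x y : ginv (gmul x y) = gmul (ginv y) (ginv x).
Proof.
by symmetry; apply: ginv_unique; rewrite -gmulA [gmul (ginv x) _]gmulA gmulV gmul1 gmulV.
Qed.

Lemma morph2_1 (om : G -> G -> G) : is_morph2 om -> om (@gone G) (@gone G) = @gone G.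
Proof. by move=> hm; apply: (@gmulI (om (@gone G) (@gone G))); rewrite -hm !gmul1 gmulg1. Qed.

Lemma morph2_V (om : G -> G -> G) x y : is_morph2 om -> om (ginv x) (ginv y) = ginv (om x y).
Proof. by move=> hm; apply: ginv_unique; rewrite -hm !gmulV morph2_1. Qed.

End GroupFacts.

Definition kinv (G : group) (a : word -> G) : word -> G := fun u => ginv (a u).

Section Twisting.
Variables (G : group) (om : G -> G -> G) (h : G).
Hypothesis om_morph : is_morph2 om.
Local Notation omh := (fun x y => gmul h (om x y)).
Local Notation omad := (fun x y => ad h (om x y)).

Lemma inK_twist (p q a : word -> G) : inK omh p -> inK omh q -> inK om a ->
  inK omad (kmul (kmul p a) (kinv q)).
Proof.
move=> hp hq ha u; rewrite /kmul /kinv {1}hp {1}hq {1}ha /ad.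
by rewrite !om_morph morph2_V // !ginvM !gmulA.
Qed.

Lemma inK_untwist (p q c : word -> G) : inK omh p -> inK omh q -> inK omad c ->
  inK om (kmul (kmul (kinv p) c) q).
Proof.
move=> hp hq hc u; rewrite /kmul /kinv {1}hp {1}hq {1}hc /ad.
by rewrite !om_morph morph2_V // !ginvM !gmulA !gmulVK.
Qed.

End Twisting.

Lemma wcat_cat (t u : word) (x : cantor) : wcat (t ++ u) x = wcat t (wcat u x).
Proof.
apply: functional_extensionality => k; rewrite /wcat size_cat nth_cat.
case: (ltnP k (size t)) => hkt; first by have -> : k < size t + size u by lia.
case: (ltnP (k - size t) (size u)) => hku; first by have -> : k < size t + size u by lia.
have -> : (k < size t + size u) = false by lia.
by rewrite subnDA.
Qed.

Lemma wcat_inj (w1 w2 : word) : (forall x, wcat w1 x = wcat w2 x) -> w1 = w2.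
Proof.
move=> e.
have hs : size w1 = size w2.
  case: (ltngtP (size w1) (size w2)) => // hlt.
  - have := congr1 (fun f => f (size w1)) (e (fun _ => ~~ nth false w2 (size w1))).
    by rewrite /wcat /= ltnn hlt; case: (nth false w2 (size w1)).
  - have := congr1 (fun f => f (size w2)) (e (fun _ => ~~ nth false w1 (size w2))).
    by rewrite /wcat /= ltnn hlt; case: (nth false w1 (size w2)).
apply: (eq_from_nth (x0 := false) hs) => k hk.
have := congr1 (fun f => f k) (e (fun _ => false)).
by rewrite /wcat /= hk -hs hk.
Qed.

Lemma wcat_injr (t : word) : injective (wcat t).
Proof.
move=> x y e; apply: functional_extensionality => m.
have := congr1 (fun f => f (m + size t)) e.
by rewrite /wcat ltnNge leq_addl addnK.
Qed.

Lemma is_prefix_wcat (t : word) (x : cantor) : is_prefix t (wcat t x).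
Proof. by move=> k hk; rewrite /wcat hk. Qed.

Lemma is_prefix_wcatE (t : word) (x : cantor) :
  is_prefix t x -> wcat t (fun k => x (k + size t)) = x.
Proof.
move=> hx; apply: functional_extensionality => k; rewrite /wcat.
by case: ifP => hk; [rewrite hx | rewrite subnK // leqNgt hk].
Qed.

Lemma prefix_code_split n (s : 'I_n -> word) (w : word) : complete_prefix_code s ->
  \max_(j < n) size (s j) <= size w -> exists j u, w = s j ++ u.
Proof.
move=> hs hw; have [j [hj _]] := hs (wcat w (fun _ => false)).
exists j, (drop (size (s j)) w).
have hle : size (s j) <= size w by apply: leq_trans (leq_bigmax j) hw.
suff e : take (size (s j)) w = s j by rewrite -{1}(cat_take_drop (size (s j)) w) e.
apply: (eq_from_nth (x0 := false)); first by rewrite size_take_min; lia.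
move=> k; rewrite size_take_min => hk.
have hkj : k < size (s j) by lia.
have hkw : k < size w by lia.
by rewrite nth_take // -hj // /wcat hkw.
Qed.

Definition maps_cylinder (v : cantor -> cantor) (w' w : word) : Prop :=
  forall x, v (wcat w' x) = wcat w x.

(* Every element of V satisfies this with N the maximal length of its range
   code words; the slack N in the length bound makes the property stable
   under composition. *)
Definition replaces_prefixes (N : nat) (v : cantor -> cantor) : Prop :=
  forall w, N <= size w -> exists2 w', size w <= size w' + N & maps_cylinder v w' w.

Definition prefix_exchange (v : cantor -> cantor) : Prop :=
  injective v /\ exists N, replaces_prefixes N v.

Lemma maps_cylinder_rcons v w' w (b : bool) :
  maps_cylinder v w' w -> maps_cylinder v (rcons w' b) (rcons w b).
Proof. by move=> hvw x; rewrite -!cats1 !wcat_cat hvw. Qed.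

Lemma maps_cylinder_comp v v' w'' w' w :
  maps_cylinder v w' w -> maps_cylinder v' w'' w' -> maps_cylinder (v \o v') w'' w.
Proof. by move=> hvw hvw' x /=; rewrite hvw' hvw. Qed.

Lemma maps_cylinder_inj v w1 w2 w : injective v ->
  maps_cylinder v w1 w -> maps_cylinder v w2 w -> w1 = w2.
Proof. by move=> hinj h1 h2; apply: wcat_inj => x; apply: hinj; rewrite h1 h2. Qed.

Lemma replaces_prefixes_comp N N' v v' : replaces_prefixes N v ->
  replaces_prefixes N' v' -> replaces_prefixes (N + N') (v \o v').
Proof.
move=> hN hN' w hw.
have [w' hw' hvw] := hN w ltac:(lia).
have [w'' hw'' hvw'] := hN' w' ltac:(lia).
by exists w''; [lia | apply: maps_cylinder_comp hvw hvw'].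
Qed.

Lemma prefix_exchange_comp v v' :
  prefix_exchange v -> prefix_exchange v' -> prefix_exchange (v \o v').
Proof.
move=> [hinj [N hN]] [hinj' [N' hN']]; split; first exact: inj_comp.
by exists (N + N'); apply: replaces_prefixes_comp.
Qed.

Section Coherent.
Variables (G : group) (R : G -> G -> G).

Definition transports (v : cantor -> cantor) (c c' : word -> G) : Prop :=
  forall w' w, maps_cylinder v w' w -> c' w = c w'.

Lemma transports_from_depth N v (c c' : word -> G) : inK R c -> inK R c' ->
  (forall w' w, N <= size w -> maps_cylinder v w' w -> c' w = c w') ->
  transports v c c'.
Proof.
move=> hc hc' hdeep.
suff claim : forall k w' w, N <= size w + k -> maps_cylinder v w' w -> c' w = c w'.
  by move=> w' w; apply: (claim N); lia.
elim=> [|k IH] w' w hk hvw; first by apply: hdeep => //; lia.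
rewrite hc hc' (IH (rcons w' false)) ?(IH (rcons w' true)) ?size_rcons //;
  by [lia | apply: maps_cylinder_rcons].
Qed.

Lemma inK_eq_from_depth N (c c' : word -> G) : inK R c -> inK R c' ->
  (forall w, N <= size w -> c' w = c w) -> c' = c.
Proof.
move=> hc hc' hdeep; apply: functional_extensionality => w.
apply: (transports_from_depth (N := N) (v := id) hc hc') => [w1 w2 hw hw12 | x //].
by rewrite (wcat_inj hw12); apply: hdeep.
Qed.

Fixpoint expand (f : word -> G) (k : nat) (w : word) : G :=
  if k is k'.+1 then R (expand f k' (rcons w false)) (expand f k' (rcons w true))
  else f w.

Lemma inK_extend_from_depth N (f : word -> G) :
  (forall u, N <= size u -> f u = R (f (rcons u false)) (f (rcons u true))) ->
  exists2 c, inK R c & forall w, N <= size w -> c w = f w.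
Proof.
move=> hf; exists (fun w => expand f (N - size w) w) => [u | w hw] /=; last first.
  by have -> : N - size w = 0 by lia.
rewrite !size_rcons; case: (ltnP (size u) N) => hu.
  by have -> : N - size u = (N - (size u).+1).+1 by lia.
have -> : N - size u = 0 by lia.
have -> : N - (size u).+1 = 0 by lia.
exact: hf.
Qed.

Definition transport (v : cantor -> cantor) (c : word -> G) : word -> G :=
  epsilon (inhabits c) (fun c' => inK R c' /\ transports v c c').

Lemma exists_transport v (c : word -> G) : prefix_exchange v -> inK R c ->
  exists c', inK R c' /\ transports v c c'.
Proof.
move=> [hinj [N hN]] hc.
pose pre w := epsilon (inhabits w) (fun w' => maps_cylinder v w' w).
have hpre w : N <= size w -> maps_cylinder v (pre w) w.
  move=> hw; apply: (epsilon_spec (inhabits w) (fun w' => maps_cylinder v w' w)).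
  by have [w' _ ?] := hN w hw; exists w'.
have hdeep w' w : N <= size w -> maps_cylinder v w' w -> c (pre w) = c w'.
  by move=> hw hvw; rewrite (maps_cylinder_inj hinj (hpre w hw) hvw).
have [c' hc' hc'E] : exists2 c', inK R c' & forall w, N <= size w -> c' w = c (pre w).
  apply: inK_extend_from_depth => u hu.
  rewrite !(hdeep _ _ _ (maps_cylinder_rcons _ (hpre u hu))) ?size_rcons; [exact: hc | lia..].
exists c'; split=> //.
by apply: (transports_from_depth (N := N) hc hc') => w' w hw hvw; rewrite hc'E ?(hdeep w').
Qed.

Lemma transport_spec v (c : word -> G) : prefix_exchange v -> inK R c ->
  inK R (transport v c) /\ transports v c (transport v c).
Proof.
move=> hv hc; apply: (epsilon_spec (inhabits c) (fun c' => inK R c' /\ transports v c c')).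
exact: exists_transport.
Qed.

Lemma transport_unique v (c c' : word -> G) : prefix_exchange v -> inK R c ->
  inK R c' -> transports v c c' -> c' = transport v c.
Proof.
move=> hv hc hc' hcc'; have [hT hcT] := transport_spec hv hc.
have [_ [N hN]] := hv.
apply: (inK_eq_from_depth (N := N) hT hc') => w hw.
have [w' _ hvw] := hN w hw.
by rewrite (hcc' _ _ hvw) (hcT _ _ hvw).
Qed.

Lemma transport_comp v v' (c : word -> G) :
  prefix_exchange v -> prefix_exchange v' -> inK R c ->
  transport (v \o v') c = transport v (transport v' c).
Proof.
move=> hv hv' hc; have [hT' hcT'] := transport_spec hv' hc.
have [hTT hcTT] := transport_spec hv hT'.
have hvv' := prefix_exchange_comp hv hv'.
symmetry; apply: transport_unique => //.
have [_ [N hN]] := hv; have [_ [N' hN']] := hv'.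
apply: (transports_from_depth (N := N + N') hc hTT) => w'' w hw hvw.
have [w' hw' hvw'] := hN w ltac:(lia).
have [w''' _ hvw'''] := hN' w' ltac:(lia).
rewrite (hcTT _ _ hvw') (hcT' _ _ hvw''').
by rewrite (maps_cylinder_inj hvv'.1 (maps_cylinder_comp hvw' hvw''') hvw).
Qed.

End Coherent.

Lemma V_codes_maps_cylinder v n (t s : 'I_n -> word) sigma i u :
  V_codes v t s sigma -> maps_cylinder v (t i ++ u) (s (sigma i) ++ u).
Proof. by case=> _ _ hv x; rewrite !wcat_cat hv. Qed.

Lemma V_codes_split v n (t s : 'I_n -> word) sigma (w : word) : V_codes v t s sigma ->
  \max_(j < n) size (s j) <= size w -> exists i u, w = s (sigma i) ++ u.
Proof.
case=> _ hs _ /(prefix_code_split hs) [j [u ->]].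
by exists (sigma^-1 j)%g, u; rewrite permKV.
Qed.

Lemma inV_inj v : inV v -> injective v.
Proof.
move=> [n [t [s [sigma [ht hs hv]]]]] x y exy.
have [i [hi _]] := ht x; have [k [hk _]] := ht y.
rewrite -(is_prefix_wcatE hi) -(is_prefix_wcatE hk) !hv in exy *.
have [j [_ hj]] := hs (wcat (s (sigma i)) (fun m => x (m + size (t i)))).
have eik : i = k.
  apply: (@perm_inj _ sigma); rewrite -(hj _ (@is_prefix_wcat _ _)).
  by apply: hj; rewrite exy; apply: is_prefix_wcat.
by subst k; rewrite (wcat_injr exy).
Qed.

Lemma inV_prefix_exchange v : inV v -> prefix_exchange v.
Proof.
move=> hV; split; first exact: inV_inj.
have [n [t [s [sigma hcodes]]]] := hV.
exists (\max_(j < n) size (s j)) => w hw.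
have [i [u ->]] := V_codes_split hcodes hw.
exists (t i ++ u); last exact: V_codes_maps_cylinder.
have /= hmax := @leq_bigmax _ (fun j => size (s j)) (sigma i).
by rewrite !size_cat; lia.
Qed.

Lemma pi_transport (G : group) (R : G -> G -> G) v (a : word -> G) :
  inV v -> inK R a -> pi R v a = transport R v a.
Proof.
move=> hV ha; have [hT haT] := transport_spec (inV_prefix_exchange hV) ha.
have [hpi [n [t [s [sigma [hcodes hpiE]]]]]] : pi_spec R v a (pi R v a).
  apply: epsilon_spec; exists (transport R v a); split=> //.
  have [n [t [s [sigma hcodes]]]] := hV.
  by exists n, t, s, sigma; split=> // i u; apply: haT; apply: V_codes_maps_cylinder.
apply: (inK_eq_from_depth (N := \max_(j < n) size (s j)) hT hpi) => w hw.
have [i [u ->]] := V_codes_split hcodes hw.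
by rewrite hpiE; symmetry; apply: haT; apply: V_codes_maps_cylinder.
Qed.

Lemma transport_twist (G : group) (om : G -> G -> G) (h : G) v (p q a : word -> G) :
  is_morph2 om -> prefix_exchange v ->
  inK (fun x y => gmul h (om x y)) p -> inK (fun x y => gmul h (om x y)) q -> inK om a ->
  transport (fun x y => ad h (om x y)) v (kmul (kmul p a) (kinv q)) =
  kmul (kmul (transport (fun x y => gmul h (om x y)) v p) (transport om v a))
       (kinv (transport (fun x y => gmul h (om x y)) v q)).
Proof.
move=> hm hv hp hq ha.
have [hTp hpT] := transport_spec hv hp.
have [hTq hqT] := transport_spec hv hq.
have [hTa haT] := transport_spec hv ha.
symmetry; apply: transport_unique => //; try exact: inK_twist.
by move=> w' w hvw; rewrite /kmul /kinv (hpT _ _ hvw) (haT _ _ hvw) (hqT _ _ hvw).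
Qed.

Section Isomorphism.
Variables (G : group) (om : G -> G -> G) (h : G) (b : word -> G).
Hypotheses (om_morph : is_morph2 om) (b_coherent : inK (fun x y => gmul h (om x y)) b).
Local Notation omh := (fun x y => gmul h (om x y)).
Local Notation omad := (fun x y => ad h (om x y)).

Definition twist (x : Gelt G) : Gelt G :=
  (kmul (kmul b x.1) (kinv (transport omh x.2 b)), x.2).

Lemma inK_transport_b v : inV v -> inK omh (transport omh v b).
Proof. by move=> hv; have [] := transport_spec (inV_prefix_exchange hv) b_coherent. Qed.

Lemma inG_twist x : inG om x -> inG omad (twist x).
Proof. by case=> ha hv; split=> //=; apply: inK_twist => //; apply: inK_transport_b. Qed.

Lemma twist_inj x y : inG om x -> inG om y -> twist x = twist y -> x = y.
Proof.
case: x y => [a v] [a' v'] _ _ [e ev]; subst v'; congr pair.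
apply: functional_extensionality => u.
by have /gmulIr/gmulI := congr1 (fun f => f u) e.
Qed.

Lemma twist_onto y : inG omad y -> exists2 x, inG om x & twist x = y.
Proof.
case: y => c v [hc hv].
exists (kmul (kmul (kinv b) c) (transport omh v b), v).
  by split=> //=; apply: inK_untwist => //; apply: inK_transport_b.
congr pair; apply: functional_extensionality => u.
by rewrite /kmul /kinv /= !gmulA gmulgV gmul1 gmulK.
Qed.

Lemma twistM x y : inG om x -> inG om y -> twist (Gmul om x y) = Gmul omad (twist x) (twist y).
Proof.
case: x y => [a v] [a' v'] [ha hv] [ha' hv'] /=.
have hpv := inV_prefix_exchange hv; have hpv' := inV_prefix_exchange hv'.
have hTv' := inK_transport_b hv'.
rewrite /twist /Gmul /=; congr pair.
rewrite (pi_transport hv ha') (pi_transport hv (inK_twist om_morph b_coherent hTv' ha')).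
rewrite transport_twist // -transport_comp //.
by apply: functional_extensionality => u; rewrite /kmul /kinv !gmulA gmulVK.
Qed.

End Isomorphism.

Theorem mainTheorem14 (Gam : group) (om : Gam -> Gam -> Gam) (h : Gam) :
  is_morph2 om ->
  (exists b : word -> Gam, forall u : word,
      b u = gmul h (om (b (rcons u false)) (b (rcons u true)))) ->
  G_isomorphic om (fun x y => ad h (om x y)).
Proof.
move=> om_morph [b b_coherent]; exists (twist om h b); split.
- exact: inG_twist.
- exact: twist_inj.
- exact: twist_onto.
- exact: twistM.
Qed.
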